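(* Let $A$ be a real $m\times m$ matrix, $f\ne0$ in the range of $A$, $y$ the minimal-norm solution of $Ay=f$. Fix $q\in(0,1)$, $\alpha_0>0$, $C>1$, $\varepsilon\in(0,1)$. For each $\delta\in(0,1)$ let $f_\delta\in\mathbb{R}^m$ satisfy $\|f_\delta-f\|\le\delta$ and $(1-q)\alpha_0q\|Q_{\alpha_0q}^{-1}f_\delta\|>C\delta^\varepsilon$, and let $n_\delta$ be the smallest integer $n\ge1$ with $G_n\le C\delta^\varepsilon$ (the sequence $G_n$ built from $f_\delta$). Then $\lim_{\delta\to0}q^{n_\delta}=0$, and hence $\lim_{\delta\to0}n_\delta=\infty$.
   Context: $A^*$ is the transpose of $A$, $Q:=AA^*$, $Q_a:=Q+aI$ for $a>0$; $\|\cdot\|$ is the Euclidean norm. $G_0=0$ and $G_n=qG_{n-1}+(1-q)\alpha_0q^n\|Q_{\alpha_0q^n}^{-1}f_\delta\|$ for $n\ge1$. *)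

(* real numbers, limits, Rpower. Vectors of R^m are nat -> R
   (only indices < m matter); m x m matrices are nat -> nat -> R. *)
From Stdlib Require Import Reals ClassicalEpsilon.
Open Scope R_scope.

Fixpoint rsum (n : nat) (g : nat -> R) : R :=
  match n with O => 0 | S k => rsum k g + g k end.

Definition vec := nat -> R.
Definition mat := nat -> nat -> R.

Definition matvec (m : nat) (A : mat) (x : vec) : vec :=
  fun i => rsum m (fun j => A i j * x j).

Definition transp (A : mat) : mat := fun i j => A j i.

Definition vnorm (m : nat) (x : vec) : R := sqrt (rsum m (fun i => x i ^ 2)).

Definition veq (m : nat) (x y : vec) : Prop := forall i, (i < m)%nat -> x i = y i.

Definition Qop (m : nat) (A : mat) (x : vec) : vec :=
  matvec m A (matvec m (transp A) x).
Definition Qa (m : nat) (A : mat) (a : R) (x : vec) : vec :=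
  fun i => Qop m A x i + a * x i.

(* Q_a^{-1} g : the (unique, for a > 0) solution x of Q_a x = g,
   selected by Hilbert's epsilon. *)
Definition Qinv (m : nat) (A : mat) (a : R) (g : vec) : vec :=
  epsilon (inhabits (fun _ : nat => 0)) (fun x => veq m (Qa m A a x) g).

Fixpoint Gseq (m : nat) (A : mat) (q alpha0 : R) (fd : vec) (n : nat) : R :=
  match n with
  | O => 0
  | S k => q * Gseq m A q alpha0 fd k
           + (1 - q) * alpha0 * q ^ (S k)
             * vnorm m (Qinv m A (alpha0 * q ^ (S k)) fd)
  end.

From Stdlib Require Import Reals Lra Lia ClassicalEpsilon.
From mathcomp Require all_boot all_order all_algebra Rstruct.
Open Scope R_scope.

(** For [n >= 1] the last term of [G_n] gives
    [G_n >= (1 - q) a_n ||Q_(a_n)^-1 f_d||] with [a_n = alpha0 q^n <= alpha0], and since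
    [Q_a] is bounded uniformly in [a <= alpha0], [||Q_a^-1 g||] is bounded below by a
    multiple of any coordinate [|g_i|].  Choosing [i] with [f_i <> 0], [|(f_d)_i| >= |f_i| / 2]
    for small [d], so the stopping rule [G_(n_d) <= C d^eps] forces [q^(n_d) = O(d^eps)].
    That [Q_a^-1 f_d] exists at all comes from [Q_a = A A^T + a I] being positive definite. *)

Lemma pow_le_1 (q : R) (n : nat) : 0 <= q <= 1 -> q ^ n <= 1.
Proof.
intros Hq. induction n as [|n IHn]; simpl; [lra|].
assert (0 <= q ^ n) by (apply pow_le; lra). nra.
Qed.

Lemma pow_le_pow_of_le_1 (q : R) (n N : nat) : 0 <= q <= 1 -> (n <= N)%nat -> q ^ N <= q ^ n.
Proof.
intros Hq HnN. replace N with (n + (N - n))%nat by lia. rewrite pow_add.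
rewrite <- (Rmult_1_r (q ^ n)) at 2.
apply Rmult_le_compat_l; [apply pow_le, Hq | apply pow_le_1, Hq].
Qed.

Lemma Rpower_eventually_lt (eps e : R) : 0 < eps -> 0 < e ->
  exists eta, 0 < eta /\ forall d, 0 < d < eta -> Rpower d eps < e.
Proof.
intros Heps He. exists (Rpower e (/ eps)). split; [apply exp_pos|].
intros d Hd. rewrite <- (Rpower_1 e He). replace 1 with (/ eps * eps) by (field; lra).
rewrite <- Rpower_mult. apply Rlt_Rpower_l; [exact Heps | exact Hd].
Qed.

Lemma rsum_ext (n : nat) (f g : nat -> R) :
  (forall j, (j < n)%nat -> f j = g j) -> rsum n f = rsum n g.
Proof.
induction n as [|n IHn]; intros Hfg; simpl; [reflexivity|].
rewrite IHn, Hfg; [reflexivity | lia | intros; apply Hfg; lia].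
Qed.

Lemma rsum_le (n : nat) (f g : nat -> R) :
  (forall j, (j < n)%nat -> f j <= g j) -> rsum n f <= rsum n g.
Proof.
induction n as [|n IHn]; intros Hfg; simpl; [lra|].
assert (rsum n f <= rsum n g) by (apply IHn; intros; apply Hfg; lia).
assert (f n <= g n) by (apply Hfg; lia).
lra.
Qed.

Lemma rsum_nonneg (n : nat) (f : nat -> R) :
  (forall j, (j < n)%nat -> 0 <= f j) -> 0 <= rsum n f.
Proof.
induction n as [|n IHn]; intros Hf; simpl; [lra|].
assert (0 <= rsum n f) by (apply IHn; intros; apply Hf; lia).
assert (0 <= f n) by (apply Hf; lia).
lra.
Qed.

Lemma rsum_mult_r (n : nat) (f : nat -> R) (c : R) :
  rsum n (fun j => f j * c) = rsum n f * c.
Proof. induction n as [|n IHn]; simpl; [ring|]. rewrite IHn; ring. Qed.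

Lemma Rabs_rsum_le (n : nat) (f : nat -> R) :
  Rabs (rsum n f) <= rsum n (fun j => Rabs (f j)).
Proof.
induction n as [|n IHn]; simpl; [rewrite Rabs_R0; lra|].
pose proof (Rabs_triang (rsum n f) (f n)); lra.
Qed.

Lemma term_le_rsum (n : nat) (f : nat -> R) (k : nat) :
  (forall j, (j < n)%nat -> 0 <= f j) -> (k < n)%nat -> f k <= rsum n f.
Proof.
induction n as [|n IHn]; intros Hf Hk; [lia|]; simpl.
assert (0 <= rsum n f) by (apply rsum_nonneg; intros; apply Hf; lia).
destruct (Nat.eq_dec k n) as [->|Hkn]; [lra|].
assert (f k <= rsum n f) by (apply IHn; [intros; apply Hf|]; lia).
assert (0 <= f n) by (apply Hf; lia).
lra.
Qed.

Lemma Rabs_le_vnorm (m : nat) (x : vec) (i : nat) :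
  (i < m)%nat -> Rabs (x i) <= vnorm m x.
Proof.
intros Hi. unfold vnorm. rewrite <- (sqrt_pow2 (Rabs (x i))) by apply Rabs_pos.
apply sqrt_le_1_alt. rewrite pow2_abs.
apply (term_le_rsum m (fun i => x i ^ 2)); [intros; nra | exact Hi].
Qed.

Lemma Rabs_matvec_le (m : nat) (M : mat) (u : vec) (b : nat -> R) (i : nat) :
  (forall j, (j < m)%nat -> Rabs (u j) <= b j) ->
  Rabs (matvec m M u i) <= rsum m (fun j => Rabs (M i j) * b j).
Proof.
intros Hu. eapply Rle_trans; [apply Rabs_rsum_le|].
apply rsum_le. intros j Hj. rewrite Rabs_mult.
apply Rmult_le_compat_l; [apply Rabs_pos | auto].
Qed.

(* MathComp is imported only inside this module: its [ssrnat] notations would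
   reinterpret [<] on [nat] in the statements outside. *)
Module QaMatrix.
Import all_boot all_order all_algebra Rstruct.
Import Order.TTheory GRing.Theory Num.Theory.
Local Open Scope ring_scope.

Lemma gram_add_scalar_unitmx (F : realFieldType) (m n : nat) (B : 'M[F]_(m, n)) (a : F) :
  0 < a -> B *m B^T + a%:M \in unitmx.
Proof.
move=> a_gt0; rewrite -row_free_unit; apply/inj_row_free => v.
rewrite mulmxDr mulmxA mul_mx_scalar => Mv0.
have /matrixP/(_ 0 0) : (v *m B *m B^T + a *: v) *m v^T = 0 by rewrite Mv0 mul0mx.
(* [v M v^T = |v B|^2 + a |v|^2] *)
rewrite mulmxDl -mulmxA -trmx_mul -scalemxAl !mxE.
under eq_bigr do rewrite [_^T _ _]mxE -expr2.
under [X in a * X]eq_bigr do rewrite [_^T _ _]mxE -expr2.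
have sq_ge0 (I : finType) (x : I -> F) : 0 <= \sum_i x i ^+ 2.
  by apply: sumr_ge0 => i _; apply: sqr_ge0.
move/eqP; rewrite paddr_eq0 ?pmulr_rge0 // => /andP[_].
rewrite mulf_eq0 gt_eqF //= => /eqP/psumr_eq0P v0.
apply/rowP => j; rewrite mxE; apply/eqP; rewrite -sqrf_eq0 v0 // => *; exact: sqr_ge0.
Qed.

Lemma rsumE (n : nat) (g : nat -> R) : rsum n g = \sum_(j < n) g j.
Proof. by elim: n => [|n IHn]; rewrite ?big_ord0 // big_ord_recr -IHn. Qed.

Definition mx_of (m : nat) (A : mat) : 'M[R]_m := \matrix_(i, j) A i j.
Definition cv_of (m : nat) (x : vec) : 'cV[R]_m := \col_i x i.
Definition vec_of (m : nat) (v : 'cV[R]_m) : vec :=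
  fun i => if insub i is Some j then v j 0 else 0.

Lemma cv_ofK (m : nat) (v : 'cV[R]_m) : cv_of m (vec_of m v) = v.
Proof. by apply/colP => j; rewrite mxE /vec_of valK. Qed.

Lemma mx_of_transp (m : nat) (A : mat) : mx_of m (transp A) = (mx_of m A)^T.
Proof. by apply/matrixP => i j; rewrite !mxE. Qed.

Lemma cv_of_matvec (m : nat) (A : mat) (x : vec) :
  cv_of m (matvec m A x) = mx_of m A *m cv_of m x.
Proof.
by apply/colP => i; rewrite !mxE /matvec rsumE; apply: eq_bigr => j _; rewrite !mxE.
Qed.

Lemma cv_of_Qa (m : nat) (A : mat) (a : R) (x : vec) :
  cv_of m (Qa m A a x) = (mx_of m A *m (mx_of m A)^T + a%:M) *m cv_of m x.
Proof.
rewrite mulmxDl mul_scalar_mx -mulmxA -mx_of_transp -!cv_of_matvec.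
by apply/colP => i; rewrite !mxE.
Qed.

Local Open Scope R_scope.

Lemma Qa_solvable (m : nat) (A : mat) (a : R) (g : vec) :
  0 < a -> exists x, veq m (Qa m A a x) g.
Proof.
move=> /RltP a_gt0; pose M := (mx_of m A *m (mx_of m A)^T + a%:M)%R.
have M_unit : M \in unitmx by apply: gram_add_scalar_unitmx.
exists (vec_of m (invmx M *m cv_of m g)) => i /ssrnat.ltP lt_im.
have /colP/(_ (Ordinal lt_im)) := cv_of_Qa m A a (vec_of m (invmx M *m cv_of m g)).
by rewrite cv_ofK mulKVmx // !mxE; apply.
Qed.

End QaMatrix.

Definition Qa_row_bound (m : nat) (A : mat) (i : nat) : R :=
  rsum m (fun j => Rabs (A i j) * rsum m (fun k => Rabs (A k j))).

Lemma Qa_row_bound_nonneg (m : nat) (A : mat) (i : nat) : 0 <= Qa_row_bound m A i.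
Proof.
apply rsum_nonneg. intros j _.
apply Rmult_le_pos; [apply Rabs_pos | apply rsum_nonneg; intros; apply Rabs_pos].
Qed.

Lemma Rabs_Qa_le (m : nat) (A : mat) (a : R) (x : vec) (i : nat) :
  0 <= a -> (i < m)%nat ->
  Rabs (Qa m A a x i) <= (Qa_row_bound m A i + a) * vnorm m x.
Proof.
intros Ha Hi. unfold Qa, Qop.
assert (HATx : forall j, (j < m)%nat ->
  Rabs (matvec m (transp A) x j) <= rsum m (fun k => Rabs (A k j)) * vnorm m x).
{ intros j _. rewrite <- rsum_mult_r.
  apply Rabs_matvec_le. intros k Hk. apply Rabs_le_vnorm, Hk. }
pose proof (Rabs_matvec_le m A _ _ i HATx) as HQ.
replace (rsum m _) with (Qa_row_bound m A i * vnorm m x) in HQ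
  by (unfold Qa_row_bound; rewrite <- rsum_mult_r; apply rsum_ext; intros; ring).
pose proof (Rabs_triang (matvec m A (matvec m (transp A) x) i) (a * x i)).
rewrite Rabs_mult, (Rabs_pos_eq a Ha) in *.
pose proof (Rabs_le_vnorm m x i Hi). pose proof (Rabs_pos (x i)).
nra.
Qed.

Lemma Qinv_spec (m : nat) (A : mat) (a : R) (g : vec) :
  0 < a -> veq m (Qa m A a (Qinv m A a g)) g.
Proof. intros Ha. unfold Qinv. apply epsilon_spec, QaMatrix.Qa_solvable, Ha. Qed.

Lemma Rabs_le_Qinv (m : nat) (A : mat) (a : R) (g : vec) (i : nat) :
  0 < a -> (i < m)%nat ->
  Rabs (g i) <= (Qa_row_bound m A i + a) * vnorm m (Qinv m A a g).
Proof.
intros Ha Hi. rewrite <- (Qinv_spec m A a g Ha i Hi).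
apply Rabs_Qa_le; [lra | exact Hi].
Qed.

Lemma Gseq_nonneg (m : nat) (A : mat) (q alpha0 : R) (g : vec) (n : nat) :
  0 < q < 1 -> 0 < alpha0 -> 0 <= Gseq m A q alpha0 g n.
Proof.
intros Hq Ha. induction n as [|n IHn]; simpl; [lra|].
assert (0 <= vnorm m (Qinv m A (alpha0 * (q * q ^ n)) g)) by apply sqrt_pos.
assert (0 <= q * q ^ n) by (apply pow_le with (n := S n); lra).
assert (0 <= (1 - q) * alpha0 * (q * q ^ n)) by (apply Rmult_le_pos; nra).
nra.
Qed.


Lemma Gseq_ge_pow (m : nat) (A : mat) (q alpha0 : R) (g : vec) (n i : nat) :
  0 < q < 1 -> 0 < alpha0 -> (1 <= n)%nat -> (i < m)%nat ->
  (1 - q) * alpha0 * Rabs (g i) * q ^ n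
    <= (Qa_row_bound m A i + alpha0) * Gseq m A q alpha0 g n.
Proof.
intros Hq Ha Hn Hi. destruct n as [|n]; [lia|].
set (a := alpha0 * q ^ S n). set (x := Qinv m A a g).
assert (Hqn : 0 < q ^ S n <= 1) by (split; [apply pow_lt | apply pow_le_1]; lra).
assert (Ha_pos : 0 < a <= alpha0) by (unfold a; split; nra).
pose proof (Rabs_le_Qinv m A a g i (proj1 Ha_pos) Hi) as Hgx. fold x in Hgx.
assert (Hlast : (1 - q) * a * vnorm m x <= Gseq m A q alpha0 g (S n)).
{ change (Gseq m A q alpha0 g (S n)) with
    (q * Gseq m A q alpha0 g n + (1 - q) * alpha0 * q ^ S n * vnorm m x).
  pose proof (Gseq_nonneg m A q alpha0 g n Hq Ha).
  unfold a. nra. }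
pose proof (Qa_row_bound_nonneg m A i).
pose proof (Gseq_nonneg m A q alpha0 g (S n) Hq Ha).
assert (0 <= (1 - q) * a) by nra.
apply Rle_trans with ((Qa_row_bound m A i + a) * ((1 - q) * a * vnorm m x)).
- replace ((1 - q) * alpha0 * Rabs (g i) * q ^ S n) with ((1 - q) * a * Rabs (g i))
    by (unfold a; ring).
  nra.
- apply Rle_trans with ((Qa_row_bound m A i + a) * Gseq m A q alpha0 g (S n)); nra.
Qed.

Lemma pow_le_of_Gseq_le (m : nat) (A : mat) (q alpha0 : R) (f g : vec) (n i : nat) (b : R) :
  0 < q < 1 -> 0 < alpha0 -> (1 <= n)%nat -> (i < m)%nat ->
  vnorm m (fun j => g j - f j) <= Rabs (f i) / 2 -> Gseq m A q alpha0 g n <= b ->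
  (1 - q) * alpha0 * (Rabs (f i) / 2) * q ^ n <= (Qa_row_bound m A i + alpha0) * b.
Proof.
intros Hq Ha Hn Hi Hgf HG.
assert (Hgi : Rabs (f i) / 2 <= Rabs (g i)).
{ pose proof (Rabs_le_vnorm m (fun j => g j - f j) i Hi) as Hdi; cbv beta in Hdi.
  pose proof (Rabs_triang_inv (f i) (f i - g i)).
  rewrite Rabs_minus_sym in Hdi.
  replace (f i - (f i - g i)) with (g i) in * by ring. lra. }
pose proof (Gseq_ge_pow m A q alpha0 g n i Hq Ha Hn Hi).
pose proof (Qa_row_bound_nonneg m A i).
assert (0 < (1 - q) * alpha0 * q ^ n).
{ pose proof (pow_lt q n (proj1 Hq)). repeat apply Rmult_lt_0_compat; lra. }
apply Rle_trans with ((1 - q) * alpha0 * Rabs (g i) * q ^ n).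
- replace ((1 - q) * alpha0 * (Rabs (f i) / 2) * q ^ n)
    with ((1 - q) * alpha0 * q ^ n * (Rabs (f i) / 2)) by ring.
  replace ((1 - q) * alpha0 * Rabs (g i) * q ^ n)
    with ((1 - q) * alpha0 * q ^ n * Rabs (g i)) by ring.
  apply Rmult_le_compat_l; lra.
- apply Rle_trans with ((Qa_row_bound m A i + alpha0) * Gseq m A q alpha0 g n); [assumption|].
  apply Rmult_le_compat_l; lra.
Qed.



Lemma pow_vanishing_of_le_Rpower (q c K eps r : R) (n : R -> nat) :
  0 <= q -> 0 < c -> 0 < K -> 0 < eps -> 0 < r ->
  (forall d, 0 < d < 1 -> d <= r -> c * q ^ n d <= K * Rpower d eps) ->
  forall e, 0 < e -> exists eta, 0 < eta /\
     forall d, 0 < d < 1 -> d < eta -> Rabs (q ^ n d) < e.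
Proof.
intros Hq Hc HK Heps Hr Hpow e He.
destruct (Rpower_eventually_lt eps (c * e / K) Heps) as [eta [Heta Hsmall]].
{ apply Rdiv_lt_0_compat; nra. }
exists (Rmin eta r). split; [apply Rmin_glb_lt; lra|].
intros d Hd Hdeta. apply Rmin_Rgt_l in Hdeta.
specialize (Hpow d Hd (Rlt_le _ _ (proj2 Hdeta))).
specialize (Hsmall d (conj (proj1 Hd) (proj1 Hdeta))).
rewrite Rabs_pos_eq by (apply pow_le, Hq).
apply (Rmult_lt_reg_l c); [exact Hc|].
apply Rle_lt_trans with (K * Rpower d eps); [exact Hpow|].
replace (c * e) with (K * (c * e / K)) by (field; lra).
apply Rmult_lt_compat_l; assumption.
Qed.

Lemma unbounded_of_pow_vanishing (q : R) (n : R -> nat) :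
  0 < q < 1 ->
  (forall e, 0 < e -> exists eta, 0 < eta /\
     forall d, 0 < d < 1 -> d < eta -> Rabs (q ^ n d) < e) ->
  forall N : nat, exists eta, 0 < eta /\
     forall d, 0 < d < 1 -> d < eta -> (N <= n d)%nat.
Proof.
intros Hq Hlim N. destruct (Hlim (q ^ N)) as [eta [Heta Hsmall]]; [apply pow_lt; lra|].
exists eta. split; [exact Heta|]. intros d Hd Hdeta.
specialize (Hsmall d Hd Hdeta). rewrite Rabs_pos_eq in Hsmall by (apply pow_le; lra).
destruct (Nat.le_gt_cases N (n d)) as [HN|HN]; [exact HN|].
assert (q ^ N <= q ^ n d) by (apply pow_le_pow_of_le_1; [lra | lia]).
lra.
Qed.

Theorem lemma2p8
  (m : nat) (A : mat) (f y : vec)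
  (Hf_range : exists x : vec, veq m (matvec m A x) f)
  (Hf_nz : exists i, (i < m)%nat /\ f i <> 0)
  (Hy_sol : veq m (matvec m A y) f)
  (Hy_min : forall z : vec, veq m (matvec m A z) f -> vnorm m y <= vnorm m z)
  (q alpha0 C eps : R)
  (Hq : 0 < q < 1) (Ha0 : 0 < alpha0) (HC : 1 < C) (Heps : 0 < eps < 1)
  (fd : R -> vec) (nd : R -> nat)
  (Hfd : forall d, 0 < d < 1 ->
     vnorm m (fun i => fd d i - f i) <= d /\
     (1 - q) * alpha0 * q * vnorm m (Qinv m A (alpha0 * q) (fd d))
       > C * Rpower d eps)
  (Hnd : forall d, 0 < d < 1 ->
     (1 <= nd d)%nat /\
     Gseq m A q alpha0 (fd d) (nd d) <= C * Rpower d eps /\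
     (forall k, (1 <= k)%nat -> (k < nd d)%nat ->
        Gseq m A q alpha0 (fd d) k > C * Rpower d eps)) :
  (forall e, 0 < e -> exists eta, 0 < eta /\
     forall d, 0 < d < 1 -> d < eta -> Rabs (q ^ (nd d)) < e)
  /\
  (forall N : nat, exists eta, 0 < eta /\
     forall d, 0 < d < 1 -> d < eta -> (N <= nd d)%nat).
Proof.
destruct Hf_nz as [i [Hi Hfi]].
pose proof (Rabs_pos_lt _ Hfi) as Hf_pos.
assert (Hlim : forall e, 0 < e -> exists eta, 0 < eta /\
          forall d, 0 < d < 1 -> d < eta -> Rabs (q ^ nd d) < e).
{ apply (pow_vanishing_of_le_Rpower q ((1 - q) * alpha0 * (Rabs (f i) / 2))
           ((Qa_row_bound m A i + alpha0) * C) eps (Rabs (f i) / 2)); try lra.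
  - repeat apply Rmult_lt_0_compat; lra.
  - pose proof (Qa_row_bound_nonneg m A i). apply Rmult_lt_0_compat; lra.
  - intros d Hd Hdf. destruct (Hnd d Hd) as [Hn [HG _]].
    rewrite (Rmult_assoc (Qa_row_bound m A i + alpha0)).
    apply (pow_le_of_Gseq_le m A q alpha0 f (fd d)); try assumption.
    apply Rle_trans with d; [apply (Hfd d Hd) | exact Hdf]. }
split; [exact Hlim | exact (unbounded_of_pow_vanishing q nd Hq Hlim)].
Qed.
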